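(* For every $A\in\mathbb{R}_+^{n\times n}$, $$\min_{B\in\Omega(A)}\rho(B)\;\leq\;\frac{1}{n}\sum_{i=1}^n\sum_{j=1}^n a_{i,j}\;\leq\;\max_{B\in\Omega(A)}\rho(B).$$
   Context: $\mathbb{R}_+^{n\times n}$ denotes the set of $n\times n$ matrices with nonnegative real entries. For $A=(a_{i,j})\in\mathbb{R}_+^{n\times n}$, the set of row-permuted matrices is $\Omega(A)=\{B\in\mathbb{R}_+^{n\times n}:\ \forall i\ \exists\text{ a permutation }\phi_i \text{ of }\{1,\dots,n\}\text{ with } b_{i,j}=a_{i,\phi_i(j)}\ \forall j\}$, i.e. each row of $B$ is a rearrangement of the corresponding row of $A$. $\rho(B)$ denotes the spectral radius (Perron root) of $B$. $\Omega(A)$ is a finite set. *)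

From HB Require Import structures.
From mathcomp Require Import all_boot all_order fingroup perm all_algebra.
From mathcomp Require Import complex.
Set Implicit Arguments. Unset Strict Implicit. Unset Printing Implicit Defensive.
Import Order.TTheory GRing.Theory Num.Theory.
Local Open Scope ring_scope.

Definition nonneg_mx (R : rcfType) (n : nat) (A : 'M[R]_n) : Prop :=
  forall i j, 0 <= A i j.

(* B \in Omega(A): each row of B is a rearrangement of the corresponding row of A. *)
Definition row_permuted (R : rcfType) (n : nat) (A B : 'M[R]_n) : Prop :=
  forall i : 'I_n, exists phi : 'S_n, forall j : 'I_n, B i j = A i (phi j).

Definition eigenvalues (R : rcfType) (n : nat) (B : 'M[R]_n) : seq R[i] :=
  sval (closed_field_poly_normal (char_poly (map_mx (fun x : R => (x%:C)%C) B))).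

(* Spectral radius: the largest modulus of a complex eigenvalue (0 if n = 0). *)
Definition spectral_radius (R : rcfType) (n : nat) (B : 'M[R]_n) : R :=
  \big[Num.max/0]_(z <- eigenvalues B) Normc.normc z.

(* Every row of a row-permuted matrix may be taken to be a cyclic shift of the
   corresponding row of A.  Let r be the vector of row sums of A, S the sum of
   all entries and m = S/n.  Lower bound: the n shifts of row i have r-weighted
   sums averaging to r_i * S / n, so some shift k_i gives B r <= m r, and the
   Collatz-Wielandt bound yields rho(B) <= m.  Upper bound: the matrix whose row i is constant r_i / n has eigenvector
   1 for m, so det(m I - M) = 0.  As det(m I - .) is affine in each row,
   replacing one averaged row by its n shifts averages the determinant, so some
   shift does not increase it.  Doing this row by row gives a row-permuted B
   with det(m I - B) <= 0; the characteristic polynomial being monic, it has a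
   real root at least m. *)
From HB Require Import structures.
From mathcomp Require Import all_boot all_order fingroup perm all_algebra.
From mathcomp Require Import complex polyrcf.
Set Implicit Arguments. Unset Strict Implicit. Unset Printing Implicit Defensive.
Import Order.TTheory GRing.Theory Num.Theory.
Local Open Scope ring_scope.

Section SpectralRadius.
Variable R : rcfType.

Lemma mem_eigenvalues n (B : 'M[R]_n) z :
  (z \in eigenvalues B) = root (char_poly (map_mx (real_complex R) B)) z.
Proof.
rewrite /eigenvalues; case: closed_field_poly_normal => s /= ->.
by rewrite (monicP (char_poly_monic _)) scale1r root_prod_XsubC.
Qed.

Lemma normc_real (x : R) : Normc.normc (x%:C)%C = `|x|.
Proof. by rewrite /Normc.normc /= expr0n /= addr0 sqrtr_sqr. Qed.

Lemma normc_ge0 (z : R[i]) : 0 <= Normc.normc z.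
Proof. by case: z => a b; rewrite /= sqrtr_ge0. Qed.

Lemma normc_sum_le (I : Type) (r : seq I) (F : I -> R[i]) :
  Normc.normc (\sum_(i <- r) F i) <= \sum_(i <- r) Normc.normc (F i).
Proof.
elim: r => [|a r IH]; first by rewrite !big_nil Normc.normc0.
by rewrite !big_cons; apply: le_trans (le_normcD _ _) _; apply: lerD.
Qed.

Lemma spectral_radius_ge0 n (B : 'M[R]_n) : 0 <= spectral_radius B.
Proof.
apply: (big_ind (fun y => 0 <= y)) => // [a b a0 _|z _]; last exact: normc_ge0.
by rewrite le_max a0.
Qed.

Lemma normc_le_spectral_radius n (B : 'M[R]_n) z :
  z \in eigenvalues B -> Normc.normc z <= spectral_radius B.
Proof. by move=> Bz; rewrite /spectral_radius; apply: le_bigmax_seq. Qed.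

Lemma spectral_radius_le n (B : 'M[R]_n) c : 0 <= c ->
  (forall z, z \in eigenvalues B -> Normc.normc z <= c) -> spectral_radius B <= c.
Proof.
move=> c0 Bc; rewrite /spectral_radius big_seq.
by apply: (big_ind (fun y => y <= c)) => // a b ac bc; rewrite ge_max ac bc.
Qed.

Lemma spectral_radius_mx0 (B : 'M[R]_0) : spectral_radius B = 0.
Proof.
apply/le_anti; rewrite spectral_radius_ge0 andbT spectral_radius_le // => z.
by rewrite mem_eigenvalues /char_poly det_mx00 (negbTE (root1 _)).
Qed.

Lemma char_poly_trmx (F : comNzRingType) n (B : 'M[F]_n) :
  char_poly B^T = char_poly B.
Proof.
rewrite /char_poly -det_tr; congr (\det _).
by apply/matrixP => i j; rewrite !mxE eq_sym.
Qed.

Lemma horner_char_poly n (B : 'M[R]_n) c : (char_poly B).[c] = \det (c%:M - B).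
Proof.
rewrite /char_poly -horner_evalE -det_map_mx; congr (\det _).
apply/matrixP => i j; rewrite !mxE /= horner_evalE !hornerE.
by case: (i == j); rewrite /= ?hornerE ?mulr0n ?mulr1n.
Qed.

Lemma eigenvalues_eigenvector n (B : 'M[R]_n) z : z \in eigenvalues B ->
  exists2 v : 'I_n -> R[i], exists i, v i != 0 &
    forall i, \sum_j (B i j)%:C%C * v j = z * v i.
Proof.
rewrite mem_eigenvalues -char_poly_trmx -eigenvalue_root_char.
case/eigenvalueP => v Bv v_neq0; exists (v 0).
  apply/existsP; apply: contraR v_neq0 => /existsPn v0.
  by apply/eqP/matrixP => a b; rewrite (ord1 a) mxE; apply/eqP/negPn/v0.
move=> i; move/matrixP: Bv => /(_ 0 i); rewrite !mxE => <-.
by apply: eq_bigr => j _; rewrite !mxE mulrC.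
Qed.

Section CollatzWielandt.
Variables (n : nat) (B : 'M[R]_n) (x : 'I_n -> R) (c : R).
Hypotheses (B_ge0 : forall i j, 0 <= B i j) (x_ge0 : forall i, 0 <= x i).
Hypothesis Bx_le : forall i, \sum_j B i j * x j <= c * x i.
Hypothesis x_supp : forall i, x i = 0 -> forall j, B i j = 0.

(* Compare v with x through the largest ratio |v_j| / x_j. *)
Lemma normc_eigenvalue_le_subinvariant z (v : 'I_n -> R[i]) :
  z != 0 -> (exists i, v i != 0) ->
  (forall i, \sum_j (B i j)%:C%C * v j = z * v i) -> Normc.normc z <= c.
Proof.
move=> z_neq0 [i0 vi0_neq0] Bv.
have v_supp i : x i = 0 -> v i = 0.
  move=> /x_supp Bi0; have := Bv i; rewrite big1 => [/esym/eqP|j _]; last first.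
    by rewrite Bi0 mul0r.
  by rewrite mulf_eq0 (negbTE z_neq0) => /eqP.
pose w j := Normc.normc (v j) / x j.
have vw j : Normc.normc (v j) = w j * x j.
  have [xj0|xj_neq0] := eqVneq (x j) 0; last by rewrite divfK.
  by rewrite xj0 mulr0 v_supp // Normc.normc0.
have [i _ w_max] := @arg_maxP _ R _ i0 xpredT w isT.
have w0_gt0 : 0 < w i0.
  have xi0_neq0 : x i0 != 0 by apply: contra vi0_neq0 => /eqP /v_supp ->.
  apply: divr_gt0; last by rewrite lt_def xi0_neq0 x_ge0.
  rewrite lt_def normc_ge0 andbT.
  by apply: contra vi0_neq0 => /eqP /Normc.eq0_normc ->.
have wi_ge0 : 0 <= w i by apply: le_trans (ltW w0_gt0) (w_max _ isT).
have vi_gt0 : 0 < Normc.normc (v i).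
  rewrite lt_def normc_ge0 andbT; apply: contraTneq (w_max i0 isT) => vi0.
  by rewrite /w vi0 mul0r -ltNge.
rewrite -(ler_pM2r vi_gt0) -Normc.normcM -Bv.
apply: le_trans (normc_sum_le _ _) _.
apply: (@le_trans _ _ (w i * \sum_j B i j * x j)).
  rewrite mulr_sumr; apply: ler_sum => j _.
  rewrite Normc.normcM normc_real ger0_norm // vw mulrCA.
  by rewrite ler_wpM2r ?mulr_ge0 ?B_ge0 ?x_ge0 //; apply: w_max.
by rewrite vw mulrCA ler_wpM2l.
Qed.

Lemma spectral_radius_le_subinvariant : 0 <= c -> spectral_radius B <= c.
Proof.
move=> c_ge0; apply: spectral_radius_le => // z /eigenvalues_eigenvector [v v_neq0 Bv].
have [->|z_neq0] := eqVneq z 0; first by rewrite Normc.normc0.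
exact: normc_eigenvalue_le_subinvariant Bv.
Qed.

End CollatzWielandt.

Lemma spectral_radius_ge_det_le0 n (B : 'M[R]_n) c :
  0 < c -> \det (c%:M - B) <= 0 -> c <= spectral_radius B.
Proof.
move=> c_gt0 det_le0; set p := char_poly B.
have lc_p : lead_coef p = 1 := monicP (char_poly_monic B).
have lc_gt0 : 0 < lead_coef p by rewrite lc_p ltr01.
have [T pT] := poly_pinfty_gt_lc lc_gt0.
have cT : c <= Num.max T c by rewrite le_max lexx orbT.
have sign_change : p.[c] <= 0 <= p.[Num.max T c].
  by rewrite horner_char_poly det_le0 (le_trans ler01) // -lc_p pT // le_max lexx.
have [x /andP[cx _] root_px] := poly_ivt cT sign_change.
have /normc_le_spectral_radius : (x%:C)%C \in eigenvalues B.
  by rewrite mem_eigenvalues -map_char_poly fmorph_root.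
have x_ge0 : 0 <= x := le_trans (ltW c_gt0) cx.
by rewrite normc_real ger0_norm //; apply: le_trans.
Qed.

End SpectralRadius.

Lemma sum_addr_shift (Z : finZmodType) (V : nmodType) (F : Z -> V) j :
  \sum_k F (k + j) = \sum_k F k.
Proof. by rewrite [RHS](reindex_inj (addIr j)). Qed.

Lemma exists_le_mean (R : realDomainType) (I : finType) (i0 : I) (F : I -> R) :
  exists k, F k * #|I|%:R <= \sum_l F l.
Proof.
have [k Fk | above] := pickP (fun k => F k * #|I|%:R <= \sum_l F l).
  by exists k.
suff : \sum_(l : I) \sum_m F m < \sum_l F l * #|I|%:R.
  by rewrite sumr_const -mulr_suml mulr_natr ltxx.
apply: ltr_sum => [|l _]; first by apply/hasP; exists i0; rewrite ?mem_index_enum.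
by rewrite ltNge above.
Qed.

Lemma sum_det_row (F : comNzRingType) m (I : finType) (M : I -> 'M[F]_m)
    (N : 'M[F]_m) i0 a :
  (forall k, row' i0 (M k) = row' i0 N) ->
  \sum_k row i0 (M k) = a *: row i0 N ->
  \sum_k \det (M k) = a * \det N.
Proof.
move=> same_rows sum_row.
have cofM k j : cofactor (M k) i0 j = cofactor N i0 j.
  rewrite /cofactor; congr (_ * \det _); apply/matrixP => u v.
  have := congr1 (fun X : 'M_(m.-1, m) => X u (lift j v)) (same_rows k).
  by rewrite !mxE.
rewrite (expand_det_row N i0) mulr_sumr.
under eq_bigr do rewrite (expand_det_row _ i0).
rewrite exchange_big; apply: eq_bigr => j _ /=.
under eq_bigr do rewrite cofM.
have := congr1 (fun r : 'rV_m => r 0 j) sum_row; rewrite summxE !mxE mulrA => <-.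
by rewrite mulr_suml; apply: eq_bigr => k _; rewrite mxE.
Qed.

Section RowShifts.
Variables (R : rcfType) (n : nat) (A : 'M[R]_n.+1).
Hypothesis A_ge0 : forall i j, 0 <= A i j.

Definition row_sum i := \sum_j A i j.

Definition avg_row_sum := n.+1%:R^-1 * \sum_i row_sum i.

Definition shift_rows (k : 'I_n.+1 -> 'I_n.+1) : 'M[R]_n.+1 :=
  \matrix_(i, j) A i (k i + j).

Lemma row_permuted_shift_rows k : row_permuted A (shift_rows k).
Proof. by move=> i; exists (perm (addrI (k i))) => j; rewrite permE mxE. Qed.

Lemma row_sum_ge0 i : 0 <= row_sum i.
Proof. exact: sumr_ge0. Qed.

Lemma avg_row_sum_ge0 : 0 <= avg_row_sum.
Proof. by rewrite mulr_ge0 ?invr_ge0 ?ler0n ?sumr_ge0 // => i _; apply: row_sum_ge0. Qed.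

Lemma spectral_radius_shift_rows_le :
  exists k, spectral_radius (shift_rows k) <= avg_row_sum.
Proof.
have good_shift i : exists k : 'I_n.+1,
    (\sum_j A i (k + j) * row_sum j) * n.+1%:R <= row_sum i * \sum_l row_sum l.
  have [k k_le] := exists_le_mean ord0 (fun k => \sum_j A i (k + j) * row_sum j).
  exists k; rewrite card_ord in k_le; apply: le_trans k_le _.
  rewrite exchange_big mulr_sumr; apply: ler_sum => j _ /=.
  by rewrite -mulr_suml (sum_addr_shift (A i)).
have [k k_le] := fin_all_exists good_shift.
exists k; apply: (spectral_radius_le_subinvariant (x := row_sum)).
- by move=> i j; rewrite mxE.
- exact: row_sum_ge0.
- move=> i; under eq_bigr do rewrite mxE.
  rewrite -(ler_pM2r (ltr0Sn R n)); apply: le_trans (k_le i) _.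
  rewrite /avg_row_sum mulrAC [_ * _ * n.+1%:R]mulrAC mulVf ?mul1r 1?mulrC //.
  by rewrite pnatr_eq0.
- by move=> i /psumr_eq0P Ai0 j; rewrite mxE Ai0.
- exact: avg_row_sum_ge0.
Qed.

Definition partial_shift (f : 'I_n.+1 -> option 'I_n.+1) : 'M[R]_n.+1 :=
  \matrix_(i, j) if f i is Some k then A i (k + j) else row_sum i / n.+1%:R.

Definition det_gap (M : 'M[R]_n.+1) := \det (avg_row_sum%:M - M).

Lemma det_gap_partial_shift_none : det_gap (partial_shift (fun _ => None)) = 0.
Proof.
apply/eqP/det0P; exists (const_mx 1).
  by apply/eqP => /matrixP /(_ 0 0); rewrite !mxE; apply/eqP; apply: oner_neq0.
rewrite mulmxBr mul_mx_scalar; apply/matrixP => u j; rewrite !mxE.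
under eq_bigr do rewrite !mxE mul1r.
by rewrite -mulr_suml mulr1 mulrC subrr.
Qed.

Definition set_shift (f : 'I_n.+1 -> option 'I_n.+1) i0 k :=
  fun i => if i == i0 then Some k else f i.

(* det_gap is affine in each row, and the n.+1 cyclic shifts of row i0 of A
   average to the constant row of value [row_sum i0 / n.+1]. *)
Lemma sum_det_gap_set_shift f i0 : f i0 = None ->
  \sum_k det_gap (partial_shift (set_shift f i0 k)) =
  n.+1%:R * det_gap (partial_shift f).
Proof.
move=> fi0; apply: (sum_det_row (i0 := i0)) => [k|].
  apply/matrixP => u j; rewrite !mxE /set_shift.
  by have /negbTE -> : lift i0 u != i0 by rewrite eq_sym neq_lift.
apply/matrixP => u j; rewrite summxE !mxE fi0.
under eq_bigr do rewrite !mxE /set_shift eqxx.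
rewrite sumrB sumr_const card_ord (sum_addr_shift (A i0)) -/(row_sum i0).
by rewrite mulrBr mulr_natl mulrC divfK // pnatr_eq0.
Qed.

Lemma exists_shift_rows_det_gap_le f :
  exists k, det_gap (shift_rows k) <= det_gap (partial_shift f).
Proof.
move: {2}#|[pred i | f i == None]| (erefl #|[pred i | f i == None]|) => m.
elim: m f => [|m IH] f card_none.
  exists (fun i => odflt ord0 (f i)).
  suff -> : shift_rows (fun i => odflt ord0 (f i)) = partial_shift f by [].
  apply/matrixP => i j; have := card0_eq card_none i; rewrite !mxE !inE.
  by case: (f i) => // /negbT; rewrite eqxx.
have [i0 fi0] : exists i0, f i0 = None.
  have : (0 < #|[pred i | f i == None]|)%N by rewrite card_none.
  by case/card_gt0P => i0; rewrite inE => /eqP; exists i0.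
have card_set k : #|[pred i | set_shift f i0 k i == None]| = m.
  move: card_none; rewrite (cardD1 i0) inE fi0 eqxx add1n => -[<-].
  by apply: eq_card => i; rewrite !inE /set_shift; case: (i == i0).
have [k k_le] :=
  exists_le_mean ord0 (fun k => det_gap (partial_shift (set_shift f i0 k))).
have [k' k'_le] := IH _ (card_set k).
exists k'; apply: le_trans k'_le _.
rewrite card_ord in k_le; rewrite -(ler_pM2r (ltr0Sn R n)).
apply: le_trans k_le _.
by rewrite sum_det_gap_set_shift // mulrC.
Qed.

Lemma avg_row_sum_le_spectral_radius_shift_rows :
  exists k, avg_row_sum <= spectral_radius (shift_rows k).
Proof.
have [avg_le0|avg_gt0] := leP avg_row_sum 0.
  by exists (fun _ => ord0); apply: le_trans avg_le0 (spectral_radius_ge0 _).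
have [k det_le0] := exists_shift_rows_det_gap_le (fun _ => None).
rewrite det_gap_partial_shift_none in det_le0.
by exists k; apply: spectral_radius_ge_det_le0.
Qed.

End RowShifts.

Theorem theorem3p1 (R : rcfType) (n : nat) (A : 'M[R]_n) :
  nonneg_mx A ->
  (exists B : 'M[R]_n, row_permuted A B /\
     spectral_radius B <= (n%:R)^-1 * \sum_(i < n) \sum_(j < n) A i j) /\
  (exists B : 'M[R]_n, row_permuted A B /\
     (n%:R)^-1 * \sum_(i < n) \sum_(j < n) A i j <= spectral_radius B).
Proof.
case: n A => [|n] A A_ge0.
  have A_row_permuted : row_permuted A A by move=> i; exists 1%g => j; rewrite perm1.
  by split; exists A; rewrite big_ord0 mulr0 spectral_radius_mx0.
have [k_le k_rho_le] := spectral_radius_shift_rows_le A_ge0.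
have [k_ge k_rho_ge] := avg_row_sum_le_spectral_radius_shift_rows A.
by split; [exists (shift_rows A k_le) | exists (shift_rows A k_ge)];
  split=> //; apply: row_permuted_shift_rows.
Qed.
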